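(* For $x=(x_1,x_2),y=(y_1,y_2)\in\mathbb R^2$ define $$d_1(x,y)=|x_1-y_1|+\tan^{-1}(|x_2-y_2|),\qquad d_2(x,y)=|x_2-y_2|+\tan^{-1}(|x_1-y_1|).$$ Then $(\mathbb R^2,d_1)$ and $(\mathbb R^2,d_2)$ are Gromov hyperbolic with $\delta=\pi/2$, but $(\mathbb R^2,d)$ with $d=d_1+d_2$ is not Gromov hyperbolic (for any $\delta\ge0$).
   Context: A metric space $(Y,\rho)$ is Gromov hyperbolic with constant $\delta\ge 0$ if $\rho(x,y)+\rho(z,v)\leq \max\{\rho(x,z)+\rho(y,v),\ \rho(x,v)+\rho(y,z)\}+2\delta$ for all $x,y,z,v\in Y$; it is Gromov hyperbolic if this holds for some $\delta\ge0$. Here $d_1,d_2$ are metrics on $\mathbb R^2$. *)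

From Stdlib Require Import Reals.
Open Scope R_scope.

Definition gromov_hyperbolic_with {Y : Type} (rho : Y -> Y -> R) (delta : R) : Prop :=
  0 <= delta /\
  forall x y z v : Y,
    rho x y + rho z v <= Rmax (rho x z + rho y v) (rho x v + rho y z) + 2 * delta.

Definition gromov_hyperbolic {Y : Type} (rho : Y -> Y -> R) : Prop :=
  exists delta : R, gromov_hyperbolic_with rho delta.

Definition dist1 (x y : R * R) : R :=
  Rabs (fst x - fst y) + atan (Rabs (snd x - snd y)).

Definition dist2 (x y : R * R) : R :=
  Rabs (snd x - snd y) + atan (Rabs (fst x - fst y)).

Definition dist12 (x y : R * R) : R := dist1 x y + dist2 x y.

(* Adding a term with values in [0, C] to a metric costs at most 2C in the
   four-point condition, and the real line satisfies it with constant 0; as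
   [atan] takes values in [0, PI/2) on [0, +oo), this gives the hyperbolicity of
   [dist1] and [dist2].  For [dist12] = g(x1 - y1) + g(x2 - y2), with
   g s = |s| + atan |s|, the square with corners (0,0), (t,t), (t,0), (0,t) has
   four-point defect 2 g(t) >= 2t, which is unbounded. *)

From Stdlib Require Import Reals Lra.
Open Scope R_scope.

Lemma atan_ge0 (x : R) : 0 <= x -> 0 <= atan x.
Proof.
  intros [Hx|<-]; [|rewrite atan_0; lra].
  rewrite <- atan_0; left; exact (atan_increasing 0 x Hx).
Qed.

Lemma atan_Rabs_bound (x : R) : 0 <= atan (Rabs x) <= PI / 2.
Proof.
  split; [apply atan_ge0, Rabs_pos|].
  left; apply atan_bound.
Qed.

Lemma Rabs_four_point (a b c d : R) :
  Rabs (a - b) + Rabs (c - d) <= Rmax (Rabs (a - c) + Rabs (b - d)) (Rabs (a - d) + Rabs (b - c)).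
Proof.
  apply Rmax_Rle.
  unfold Rabs; repeat destruct Rcase_abs; lra.
Qed.

Lemma gromov_hyperbolic_with_real_line {Y : Type} (f : Y -> R) :
  gromov_hyperbolic_with (fun x y => Rabs (f x - f y)) 0.
Proof.
  split; [lra|]; intros x y z v.
  rewrite Rmult_0_r, Rplus_0_r; apply Rabs_four_point.
Qed.

Lemma gromov_hyperbolic_with_bounded_perturbation {Y : Type}
    (rho sigma : Y -> Y -> R) (delta C : R) :
  0 <= C ->
  gromov_hyperbolic_with rho delta ->
  (forall x y, 0 <= sigma x y <= C) ->
  gromov_hyperbolic_with (fun x y => rho x y + sigma x y) (delta + C).
Proof.
  intros HC [Hdelta Hrho] Hsigma; split; [lra|]; intros x y z v.
  pose proof (Hrho x y z v) as Hxyzv.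
  pose proof (Hsigma x y); pose proof (Hsigma z v); pose proof (Hsigma x z);
    pose proof (Hsigma y v); pose proof (Hsigma x v); pose proof (Hsigma y z).
  revert Hxyzv; unfold Rmax; repeat destruct Rle_dec; lra.
Qed.

Lemma gromov_hyperbolic_with_dist1 : gromov_hyperbolic_with dist1 (PI / 2).
Proof.
  replace (PI / 2) with (0 + PI / 2) by ring.
  apply (gromov_hyperbolic_with_bounded_perturbation
           (fun x y => Rabs (fst x - fst y)) (fun x y => atan (Rabs (snd x - snd y)))).
  - pose proof PI_RGT_0; lra.
  - apply gromov_hyperbolic_with_real_line.
  - intros x y; apply atan_Rabs_bound.
Qed.

Lemma gromov_hyperbolic_with_dist2 : gromov_hyperbolic_with dist2 (PI / 2).
Proof.
  replace (PI / 2) with (0 + PI / 2) by ring.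
  apply (gromov_hyperbolic_with_bounded_perturbation
           (fun x y => Rabs (snd x - snd y)) (fun x y => atan (Rabs (fst x - fst y)))).
  - pose proof PI_RGT_0; lra.
  - apply gromov_hyperbolic_with_real_line.
  - intros x y; apply atan_Rabs_bound.
Qed.

Definition abs_plus_atan_abs (s : R) : R := Rabs s + atan (Rabs s).

Lemma dist12_split (x y : R * R) :
  dist12 x y = abs_plus_atan_abs (fst x - fst y) + abs_plus_atan_abs (snd x - snd y).
Proof. unfold dist12, dist1, dist2, abs_plus_atan_abs; ring. Qed.

Lemma abs_plus_atan_abs_0 : abs_plus_atan_abs 0 = 0.
Proof. unfold abs_plus_atan_abs; rewrite Rabs_R0, atan_0; ring. Qed.

Lemma abs_plus_atan_abs_opp (s : R) : abs_plus_atan_abs (- s) = abs_plus_atan_abs s.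
Proof. unfold abs_plus_atan_abs; rewrite Rabs_Ropp; reflexivity. Qed.

Lemma abs_plus_atan_abs_ge (s : R) : Rabs s <= abs_plus_atan_abs s.
Proof. unfold abs_plus_atan_abs; pose proof (atan_Rabs_bound s); lra. Qed.

Lemma dist12_square_defect (t : R) :
  dist12 (0, 0) (t, t) + dist12 (t, 0) (0, t) =
  Rmax (dist12 (0, 0) (t, 0) + dist12 (t, t) (0, t))
       (dist12 (0, 0) (0, t) + dist12 (t, t) (t, 0)) + 2 * abs_plus_atan_abs t.
Proof.
  rewrite !dist12_split; simpl.
  replace (0 - t) with (- t) by ring; replace (t - t) with 0 by ring;
    replace (t - 0) with t by ring; replace (0 - 0) with 0 by ring.
  rewrite abs_plus_atan_abs_opp, abs_plus_atan_abs_0, Rmax_left by lra.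
  ring.
Qed.

Lemma not_gromov_hyperbolic_dist12 : ~ gromov_hyperbolic dist12.
Proof.
  intros [delta [Hdelta Hfour]].
  pose proof (Hfour (0, 0) (delta + 1, delta + 1) (delta + 1, 0) (0, delta + 1)) as Hsquare.
  rewrite dist12_square_defect in Hsquare.
  pose proof (abs_plus_atan_abs_ge (delta + 1)) as Hge.
  rewrite Rabs_right in Hge by lra.
  lra.
Qed.

Theorem lemma4p4 :
  gromov_hyperbolic_with dist1 (PI / 2) /\
  gromov_hyperbolic_with dist2 (PI / 2) /\
  ~ gromov_hyperbolic dist12.
Proof.
  split; [|split].
  - exact gromov_hyperbolic_with_dist1.
  - exact gromov_hyperbolic_with_dist2.
  - exact not_gromov_hyperbolic_dist12.
Qed.
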